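(* There is an absolute constant $c>0$ such that the following holds. Let $N\ge1$, $M\ge4$ be integers, let $M'=2^n$ be the largest power of two with $M'(\log M'+2)\le M/2$ and assume $N\ge M'$. Let $b\le N$ be a positive integer multiple of $M'$ and let $k\in\mathbb N$. Then there is a 2D SLP $\mathcal G$ with at most $c\cdot(\log N+\log M+k)$ nonterminals such that for every $i\in[0..k]$, $\mathcal G$ contains a nonterminal $C_i$ with $\exp(C_i)=C_{N+i\cdot b,\,M}$.
   Context: Alphabet $\Sigma\supseteq\{0,1,\$\}$; logarithms are base 2. For $N=2^n$, $\mathsf{Bin}_N$ is the $N\times(n+2)$ array whose $i$-th row is $\$\,b_{i-1}\,\$$ with $b_{i-1}$ the $n$-bit binary representation of $i-1$; $\mathsf{ShiftBin}_N$ is the $2N\times N(n+2)$ array in which, for each $j\in[1..N]$, rows $j..j+N-1$ and columns $(j-1)(n+2)+1..j(n+2)$ form a copy of $\mathsf{Bin}_N$, all other entries being $0$. For integers $N\ge1$, $M\ge4$, let $M'=2^{n}$ be the largest power of two with $M'(\log M'+2)\le M/2$, assume $N\ge M'$, and let $B=\mathsf{ShiftBin}_{M'}$ (of size $2M'\times M'(\log M'+2)$). The 2D string $C_{N,M}$ of size $N\times M$ is the horizontal concatenation of three parts: (1) the left block, of width $M'(\log M'+2)$: $\lfloor N/(2M')\rfloor$ copies of $B$ stacked vertically, followed below by rows of $0$'s to reach height $N$; (2) the right block, of the same width: $M'$ rows of $0$'s, then $\lfloor (N-M')/(2M')\rfloor$ copies of $B$ stacked vertically, then rows of $0$'s to reach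 height $N$; (3) an all-$0$ block completing the width to $M$. A 2D SLP is a triple $(\mathcal V,\mathcal S,\rho)$ of nonterminals with dimensions, a start, and productions each being a character, a horizontal concatenation of two nonterminals of equal height, or a vertical concatenation of two nonterminals of equal width, with acyclic occurrence relation; $\exp(X)$ denotes the recursive expansion of $X$. *)

From Stdlib Require Import Reals.
From mathcomp Require Import all_boot.

Set Implicit Arguments.
Unset Strict Implicit.
Unset Printing Implicit Defensive.

(** * 2D strings: a 2D string is represented as the list of its rows. *)
Definition str2 (S : Type) := seq (seq S).

Definition height {S} (s : str2 S) : nat := size s.
Definition width {S} (s : str2 S) : nat := size (head [::] s).

(** Nonterminals are numbered 0 .. size g - 1; the production of nonterminal i
    is the i-th rule.  Acyclicity of the occurrence relation is expressed by a
    topological numbering: the right-hand side of rule i only mentions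
    nonterminals j < i. *)
Inductive rule (S : Type) :=
| Term of S
| HCat of nat & nat
| VCat of nat & nat.
Arguments HCat {S}.
Arguments VCat {S}.

Definition slp (S : Type) := seq (rule S).

Definition hcat {S} (x y : str2 S) : str2 S := [seq p.1 ++ p.2 | p <- zip x y].
Definition vcat {S} (x y : str2 S) : str2 S := x ++ y.

Definition expand_rule {S} (acc : seq (str2 S)) (r : rule S) : str2 S :=
  match r with
  | Term a => [:: [:: a]]
  | HCat x y => hcat (nth [::] acc x) (nth [::] acc y)
  | VCat x y => vcat (nth [::] acc x) (nth [::] acc y)
  end.

Definition exps {S} (g : slp S) : seq (str2 S) :=
  foldl (fun acc r => rcons acc (expand_rule acc r)) [::] g.

Definition expNT {S} (g : slp S) (i : nat) : str2 S := nth [::] (exps g) i.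

Definition rule_ok {S} (g : slp S) (i : nat) (r : rule S) : Prop :=
  match r with
  | Term _ => True
  | HCat x y => [/\ x < i, y < i & height (expNT g x) = height (expNT g y)]
  | VCat x y => [/\ x < i, y < i & width (expNT g x) = width (expNT g y)]
  end%N.

Definition slp_wf {S} (g : slp S) : Prop :=
  forall i, (i < size g)%N -> rule_ok g i (nth (HCat 0 0) g i).

Definition slp_size {S} (g : slp S) : nat := size g.

(** * The 2D strings Bin, ShiftBin and C_{N,M}  (0-based indices). *)
Section Strings.
Variables (S : Type) (c0 c1 cd : S). (* the characters 0, 1, $ *)

(* bit j (0 = most significant) of the n-bit binary representation of v *)
Definition bitc (n v j : nat) : S := if odd (v %/ 2 ^ (n.-1 - j)) then c1 else c0.

(* entry (r, c) of Bin_{2^n}, r < 2^n, c < n+2: row r is $ b_r $ *)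
Definition bin_entry (n r c : nat) : S :=
  if (c == 0) || (c == n.+1) then cd else bitc n r (c.-1).

(* entry (r, c) of ShiftBin_{2^n} (2*2^n rows, 2^n (n+2) columns) *)
Definition shiftbin_entry (n r c : nat) : S :=
  let j0 := c %/ (n + 2) in
  if (j0 <= r) && (r < j0 + 2 ^ n) then bin_entry n (r - j0) (c %% (n + 2)) else c0.

(* n with M' = 2^n: the largest n with M' (log M' + 2) <= M/2,
   i.e. 2 * 2^n * (n+2) <= M (any such n is < M). *)
Definition logMp (M : nat) : nat :=
  foldl (fun acc n => if 2 * 2 ^ n * (n + 2) <= M then n else acc) 0 (iota 0 M).
(* = the largest n < M with 2 * 2^n * (n+2) <= M (0 if none; n = 0 works
   whenever M >= 4) *)

Definition C_entry (N M r c : nat) : S :=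
  let n := logMp M in
  let Mp := 2 ^ n in
  let W := Mp * (n + 2) in
  if c < W then
    (if r %/ (2 * Mp) < N %/ (2 * Mp) then shiftbin_entry n (r %% (2 * Mp)) c else c0)
  else if c < 2 * W then
    (if r < Mp then c0
     else if (r - Mp) %/ (2 * Mp) < (N - Mp) %/ (2 * Mp)
          then shiftbin_entry n ((r - Mp) %% (2 * Mp)) (c - W) else c0)
  else c0.

Definition Cstr (N M : nat) : str2 S :=
  mkseq (fun r => mkseq (fun c => C_entry N M r c) M) N.
End Strings.

Definition log2R (x : nat) : R := Rdiv (ln (INR x)) (ln (INR 2)).

(* The grammar is built by repeated doubling.  The columns of the binary counter
   Bin_{2^m} double as [0;1] next to two stacked copies of the smaller counter,
   and the first 2^t column blocks of ShiftBin double as [Y 0; 0 Y], so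
   B = ShiftBin_{M'} costs O(log M) rules; a stack of q copies of any array, and
   any constant array, cost O(log q) rules by binary exponentiation.
   Write L(H) for the left block of C_{H,M} (floor(H/2M') copies of B over zeros);
   the right block is [0; L(H - M')] and L(q 2M' + H) = [B^q; L(H)].  As M' | b,
   2b is a multiple of 2M', so once B^(b/M') and the matching zero block exist,
   passing from height H to H + 2b costs a constant number of rules.  The heights
   N + i b are covered by the two progressions N + 2ub and N + b + 2ub. *)

From Stdlib Require Import Reals Lra.
From mathcomp Require Import all_boot zify.

Set Implicit Arguments.
Unset Strict Implicit.
Unset Printing Implicit Defensive.

Lemma logMp_fits M : 4 <= M -> 2 * (2 ^ logMp M * (logMp M + 2)) <= M.
Proof.
move=> M_ge4; rewrite mulnA /logMp; set step := fun acc k => _.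
suff fits : forall ks acc, 2 * 2 ^ acc * (acc + 2) <= M ->
  2 * 2 ^ foldl step acc ks * (foldl step acc ks + 2) <= M by exact: fits.
by elim=> [|k ks IH] acc //= fits_acc; apply: IH; rewrite /step; case: ifP.
Qed.

Section Builder.
Variable S : Type.
Implicit Types (g s : slp S) (f : nat -> nat -> S).

Lemma exps_cat g s : exists t, exps (g ++ s) = exps g ++ t.
Proof.
rewrite /exps foldl_cat; elim: s (foldl _ [::] g) => [|r s IH] acc /=.
  by exists [::]; rewrite cats0.
have [t ->] := IH (rcons acc (expand_rule acc r)).
by exists (expand_rule acc r :: t); rewrite cat_rcons.
Qed.

Lemma exps_rcons g r : exps (rcons g r) = rcons (exps g) (expand_rule (exps g) r).
Proof. by rewrite /exps foldl_rcons. Qed.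

Lemma size_exps g : size (exps g) = size g.
Proof. by elim/last_ind: g => [|g r IH] //; rewrite exps_rcons !size_rcons IH. Qed.

Lemma expNT_cat g s j : j < size g -> expNT (g ++ s) j = expNT g j.
Proof.
by move=> lt_j; rewrite /expNT; have [t ->] := exps_cat g s; rewrite nth_cat size_exps lt_j.
Qed.

Lemma expNT_rcons g r : expNT (rcons g r) (size g) = expand_rule (exps g) r.
Proof. by rewrite /expNT exps_rcons nth_rcons size_exps ltnn eqxx. Qed.

Lemma rule_ok_cat g s i r : i <= size g -> rule_ok g i r -> rule_ok (g ++ s) i r.
Proof.
by move=> le_i; case: r => [a|x y|x y] //= [lt_x lt_y eq_xy];
  rewrite !expNT_cat ?(leq_trans _ le_i).
Qed.

Lemma slp_wf_rcons g r :
  slp_wf g -> rule_ok (rcons g r) (size g) r -> slp_wf (rcons g r).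
Proof.
move=> wf_g ok_r i; rewrite size_rcons ltnS leq_eqVlt nth_rcons.
case/orP=> [/eqP-> | lt_i]; first by rewrite ltnn eqxx.
by rewrite lt_i -cats1; apply: rule_ok_cat (ltnW lt_i) (wf_g i lt_i).
Qed.

Definition array h w f : str2 S := mkseq (fun r => mkseq (f r) w) h.

Definition hjoin w1 f1 f2 r c : S := if c < w1 then f1 r c else f2 r (c - w1).
Definition vjoin h1 f1 f2 r c : S := if r < h1 then f1 r c else f2 (r - h1) c.

Notation cst a := (fun _ _ : nat => a).

Lemma mkseq_cat T (f1 f2 : nat -> T) n1 n2 :
  mkseq f1 n1 ++ mkseq f2 n2 = mkseq (fun i => if i < n1 then f1 i else f2 (i - n1)) (n1 + n2).
Proof.
rewrite /mkseq iotaD map_cat add0n -[in iota n1 _](addn0 n1) iotaDl -map_comp.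
congr (_ ++ _); last by apply: eq_map => i /=; rewrite ltnNge leq_addr addKn.
by apply/eq_in_map => i; rewrite mem_iota add0n => /andP[_ ->].
Qed.

Lemma eq_array h w f f' :
  (forall r c, r < h -> c < w -> f r c = f' r c) -> array h w f = array h w f'.
Proof.
move=> eq_f; apply/eq_in_map => r; rewrite mem_iota => /andP[_ lt_r].
by apply/eq_in_map => c; rewrite mem_iota => /andP[_ lt_c]; apply: eq_f.
Qed.

Lemma height_array h w f : height (array h w f) = h.
Proof. exact: size_mkseq. Qed.

Lemma width_array h w f : 0 < h -> width (array h w f) = w.
Proof. by case: h => // h _; rewrite /width /= size_mkseq. Qed.

Lemma vcat_array h1 h2 w f1 f2 :
  vcat (array h1 w f1) (array h2 w f2) = array (h1 + h2) w (vjoin h1 f1 f2).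
Proof. by rewrite /vcat /array mkseq_cat; apply: eq_map => r /=; rewrite /vjoin; case: ifP. Qed.

Lemma hcat_array h w1 w2 f1 f2 :
  hcat (array h w1 f1) (array h w2 f2) = array h (w1 + w2) (hjoin w1 f1 f2).
Proof.
by rewrite /hcat /array /mkseq zip_map -map_comp; apply: eq_map => r /=; rewrite mkseq_cat.
Qed.

Definition gen g h w f :=
  exists j, [/\ j < size g, 0 < h, 0 < w & expNT g j = array h w f].

Definition gen0 g h w f := [\/ h = 0, w = 0 | gen g h w f].

Lemma gen_cat g s h w f : gen g h w f -> gen (g ++ s) h w f.
Proof.
by case=> j [lt_j h_gt0 w_gt0 e_j]; exists j; rewrite size_cat ltn_addr ?expNT_cat.
Qed.

Lemma gen0_cat g s h w f : gen0 g h w f -> gen0 (g ++ s) h w f.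
Proof. by case=> [||/(gen_cat s)]; constructor. Qed.

Lemma gen_congr g h w f f' :
  (forall r c, r < h -> c < w -> f r c = f' r c) -> gen g h w f -> gen g h w f'.
Proof. by move=> eq_f [j [? ? ? e_j]]; exists j; rewrite -(eq_array eq_f). Qed.

Lemma gen0_congr g h w f f' :
  (forall r c, r < h -> c < w -> f r c = f' r c) -> gen0 g h w f -> gen0 g h w f'.
Proof. by move=> eq_f [||/(gen_congr eq_f)]; constructor. Qed.

Lemma gen_gen0 g h w f : gen g h w f -> gen0 g h w f.
Proof. exact: Or33. Qed.

Lemma gen0_gen g h w f : 0 < h -> 0 < w -> gen0 g h w f -> gen g h w f.
Proof. by move=> h_gt0 w_gt0 [h0|w0|] //; [rewrite h0 in h_gt0 | rewrite w0 in w_gt0]. Qed.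

(* Well-formedness only has to be preserved, so builders need no hypothesis on g. *)
Definition builds g K (P : slp S -> Prop) :=
  exists s, [/\ size s <= K, slp_wf g -> slp_wf (g ++ s) & P (g ++ s)].

Lemma builds_ret g K (P : slp S -> Prop) : P g -> builds g K P.
Proof. by exists [::]; rewrite cats0. Qed.

Lemma builds0 g (P : slp S -> Prop) : P g -> builds g 0 P.
Proof. exact: builds_ret. Qed.

Lemma builds_le g K K' P : builds g K P -> K <= K' -> builds g K' P.
Proof. by case=> s [le_s wf_s Ps] le_K; exists s; rewrite (leq_trans le_s). Qed.

Lemma builds_weaken g K (P Q : slp S -> Prop) :
  (forall s, P (g ++ s) -> Q (g ++ s)) -> builds g K P -> builds g K Q.
Proof. by move=> PQ [s [le_s wf_s Ps]]; exists s; split; auto. Qed.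

Lemma builds_bind g K1 K2 P Q :
  builds g K1 P -> (forall s, P (g ++ s) -> builds (g ++ s) K2 Q) -> builds g (K1 + K2) Q.
Proof.
case=> s [le_s wf_s Ps] /(_ s Ps) [s' [le_s' wf_s' Qs']].
by exists (s ++ s'); rewrite size_cat leq_add // catA; split=> // /wf_s.
Qed.

Lemma builds_nil K P : builds [::] K P -> exists2 g, slp_wf g /\ size g <= K & P g.
Proof. by case=> s [le_s wf_s Ps]; exists s => //; split=> //; apply: wf_s. Qed.

Lemma builds_rule g r h w f :
  rule_ok (rcons g r) (size g) r -> 0 < h -> 0 < w ->
  expand_rule (exps g) r = array h w f -> builds g 1 (fun g' => gen g' h w f).
Proof.
move=> ok_r h_gt0 w_gt0 e_r; exists [:: r]; rewrite cats1; split=> //.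
  by move=> wf_g; apply: slp_wf_rcons.
by exists (size g); rewrite size_rcons expNT_rcons.
Qed.

Lemma builds_term g a : builds g 1 (fun g' => gen g' 1 1 (cst a)).
Proof. exact: (builds_rule (r := Term a)). Qed.

Lemma builds_hcat g h w1 w2 f1 f2 : gen g h w1 f1 -> gen g h w2 f2 ->
  builds g 1 (fun g' => gen g' h (w1 + w2) (hjoin w1 f1 f2)).
Proof.
case=> [x [lt_x h_gt0 w1_gt0 e_x]] [y [lt_y _ _ e_y]].
apply: (builds_rule (r := HCat x y)); rewrite ?addn_gt0 ?w1_gt0 //=.
  by rewrite -cats1 !expNT_cat // e_x e_y !height_array.
by rewrite -!/(expNT g _) e_x e_y hcat_array.
Qed.

Lemma builds_vcat g h1 h2 w f1 f2 : gen g h1 w f1 -> gen g h2 w f2 ->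
  builds g 1 (fun g' => gen g' (h1 + h2) w (vjoin h1 f1 f2)).
Proof.
case=> [x [lt_x h1_gt0 w_gt0 e_x]] [y [lt_y h2_gt0 _ e_y]].
apply: (builds_rule (r := VCat x y)); rewrite ?addn_gt0 ?h1_gt0 //=.
  by rewrite -cats1 !expNT_cat // e_x e_y !width_array.
by rewrite -!/(expNT g _) e_x e_y vcat_array.
Qed.

Lemma builds_hcat0 g h w1 w2 f1 f2 : gen0 g h w1 f1 -> gen0 g h w2 f2 ->
  builds g 1 (fun g' => gen0 g' h (w1 + w2) (hjoin w1 f1 f2)).
Proof.
case=> [h0 _ | -> G2 | G1]; first by apply: builds_ret; constructor.
  apply: builds_ret => //; rewrite add0n.
  by apply: gen0_congr G2 => r c _ _; rewrite /hjoin subn0.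
case=> [h0 | -> | G2]; first by apply: builds_ret; constructor.
  apply: builds_ret => //; rewrite addn0.
  by apply: gen0_congr (gen_gen0 G1) => r c _ lt_c; rewrite /hjoin lt_c.
by apply: builds_weaken (builds_hcat G1 G2) => ?; apply: gen_gen0.
Qed.

Lemma builds_vcat0 g h1 h2 w f1 f2 : gen0 g h1 w f1 -> gen0 g h2 w f2 ->
  builds g 1 (fun g' => gen0 g' (h1 + h2) w (vjoin h1 f1 f2)).
Proof.
case=> [-> G2 | w0 _ | G1].
  apply: builds_ret => //; rewrite add0n.
  by apply: gen0_congr G2 => r c _ _; rewrite /vjoin subn0.
  by apply: builds_ret; constructor.
case=> [-> | w0 | G2].
- apply: builds_ret => //; rewrite addn0.
  by apply: gen0_congr (gen_gen0 G1) => r c lt_r _; rewrite /vjoin lt_r.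
- by apply: builds_ret; constructor.
by apply: builds_weaken (builds_vcat G1 G2) => ?; apply: gen_gen0.
Qed.

Lemma builds_doubling (A : slp S -> nat -> Prop) g m :
  (forall g s m, A g m -> A (g ++ s) m) ->
  (forall g m1 m2, A g m1 -> A g m2 -> builds g 1 (fun g' => A g' (m1 + m2))) ->
  A g 1 -> 0 < m -> builds g (2 * trunc_log 2 m) (fun g' => A g' m).
Proof.
move=> A_cat A_add; elim/ltn_ind: m g => m IH g A1 m_gt0.
have [m_le1 | m_gt1] := leqP m 1; first by rewrite (_ : m = 1); [apply: builds_ret | lia].
have m_eq := odd_double_half m; rewrite -addnn in m_eq.
have half_gt0 : 0 < m./2 by case: (odd m) m_eq => /=; lia.
have half_lt : m./2 < m by lia.
rewrite trunc_log2S // mulnS addnC -[2]/(1 + 1) addnA.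
apply: (builds_bind (builds_bind (IH _ half_lt _ A1 half_gt0) (fun s Ah => A_add _ _ _ Ah Ah))).
move=> s A2h; rewrite -m_eq; case: (odd m) => /=; last by rewrite add0n; apply: builds_ret.
by rewrite addnC; apply: A_add A2h (A_cat _ _ _ A1).
Qed.

Lemma modn_subMl m q d : q * d <= m -> (m - q * d) %% d = m %% d.
Proof. by move=> le_qd; rewrite -[in RHS](subnK le_qd) addnC modnMDl. Qed.

Lemma builds_vrep g h w f m : gen g h w f -> 0 < m ->
  builds g (2 * trunc_log 2 m) (fun g' => gen g' (m * h) w (fun r c => f (r %% h) c)).
Proof.
move=> G; apply: (builds_doubling (A := fun g m => gen g (m * h) w _)) => //.
- by move=> *; apply: gen_cat.
- move=> g' m1 m2 G1 G2; apply: builds_weaken (builds_vcat G1 G2) => ?.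
  rewrite mulnDl; apply: gen_congr => r c _ _; rewrite /vjoin.
  by case: ltnP => // /modn_subMl->.
- by rewrite mul1n; apply: gen_congr G => r c lt_r _; rewrite modn_small.
Qed.

Lemma builds_hrep g h w f m : gen g h w f -> 0 < m ->
  builds g (2 * trunc_log 2 m) (fun g' => gen g' h (m * w) (fun r c => f r (c %% w))).
Proof.
move=> G; apply: (builds_doubling (A := fun g m => gen g h (m * w) _)) => //.
- by move=> *; apply: gen_cat.
- move=> g' m1 m2 G1 G2; apply: builds_weaken (builds_hcat G1 G2) => ?.
  rewrite mulnDl; apply: gen_congr => r c _ _; rewrite /hjoin.
  by case: ltnP => // /modn_subMl->.
- by rewrite mul1n; apply: gen_congr G => r c _ lt_c; rewrite modn_small.
Qed.

Lemma builds_vrep0 g h w f m : gen g h w f ->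
  builds g (2 * trunc_log 2 m) (fun g' => gen0 g' (m * h) w (fun r c => f (r %% h) c)).
Proof.
move=> G; have [-> | m_gt0] := posnP m; first by apply: builds_ret; constructor.
by apply: builds_weaken (builds_vrep G m_gt0) => ?; apply: gen_gen0.
Qed.

(* [bind E] runs the builder E and transports the [gen]/[gen0] facts about the
   current grammar to its extension.  Costs are left as an evar by
   [eapply builds_le] and checked by arithmetic once the construction is done. *)
Ltac lift_to g s := repeat match goal with
  | H : gen g _ _ _ |- _ => apply (gen_cat s) in H
  | H : gen0 g _ _ _ |- _ => apply (gen0_cat s) in H
  end.

Tactic Notation "bind" uconstr(E) := lazymatch goal with |- builds ?g _ _ =>
  refine (builds_bind E _); let s := fresh "s" in intro s; lift_to g s end.

Lemma builds_const g a h w :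
  builds g (1 + 2 * trunc_log 2 w + 2 * trunc_log 2 h) (fun g' => gen0 g' h w (cst a)).
Proof.
have [-> | h_gt0] := posnP h; first by apply: builds_ret; constructor.
have [-> | w_gt0] := posnP w; first by apply: builds_ret; constructor.
eapply builds_le.
  bind (builds_term g a) => G1.
  bind (builds_hrep G1 w_gt0) => G2.
  apply: builds_weaken (builds_vrep G2 h_gt0) => ?; rewrite !muln1 => G3.
  by apply: gen_gen0.
lia.
Qed.

Lemma builds_vcat_cst g h1 h2 w a : gen g h1 w (cst a) -> gen g h2 w (cst a) ->
  builds g 1 (fun g' => gen g' (h1 + h2) w (cst a)).
Proof.
move=> G1 G2; apply: builds_weaken (builds_vcat G1 G2) => ?.
by apply: gen_congr => r c _ _; rewrite /vjoin; case: ifP.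
Qed.

Lemma builds_hcat_cst g h w1 w2 a : gen g h w1 (cst a) -> gen g h w2 (cst a) ->
  builds g 1 (fun g' => gen g' h (w1 + w2) (cst a)).
Proof.
move=> G1 G2; apply: builds_weaken (builds_hcat G1 G2) => ?.
by apply: gen_congr => r c _ _; rewrite /hjoin; case: ifP.
Qed.

Lemma builds_vcat0_cst g h1 h2 w a : gen0 g h1 w (cst a) -> gen0 g h2 w (cst a) ->
  builds g 1 (fun g' => gen0 g' (h1 + h2) w (cst a)).
Proof.
move=> G1 G2; apply: builds_weaken (builds_vcat0 G1 G2) => ?.
by apply: gen0_congr => r c _ _; rewrite /vjoin; case: ifP.
Qed.

Section BinaryCounter.
Variables c0 c1 cd : S.

Lemma odd_divX_modX v m e : e < m -> odd (v %/ 2 ^ e) = odd ((v %% 2 ^ m) %/ 2 ^ e).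
Proof.
move=> lt_e; rewrite {1}(divn_eq v (2 ^ m)) -(subnK (ltnW lt_e)) expnD mulnA.
by rewrite divnMDl ?expn_gt0 // oddD oddM oddX subn_eq0 leqNgt lt_e andbF.
Qed.

Lemma bin_entry_lead m v : v < 2 ^ m.+1 ->
  bin_entry c0 c1 cd m.+1 v 1 = if v < 2 ^ m then c0 else c1.
Proof.
move=> lt_v; rewrite /bin_entry /bitc /= subn0.
case: ltnP => [lt_vm | le_mv]; first by rewrite divn_small.
suff -> : v %/ 2 ^ m = 1 by [].
by apply/eqP; rewrite eqn_leq -ltnS ltn_divLR ?expn_gt0 // -expnS lt_v divn_gt0 ?expn_gt0.
Qed.

Lemma bin_entry_tail m v c : c < m.+1 ->
  bin_entry c0 c1 cd m.+1 v c.+2 = bin_entry c0 c1 cd m (v %% 2 ^ m) c.+1.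
Proof.
move=> lt_c; rewrite /bin_entry /= eqSS; case: eqP => // /eqP ne_c; rewrite /bitc /=.
by rewrite (odd_divX_modX v (m := m)); [congr (if odd (_ %/ 2 ^ _) then _ else _) | ]; lia.
Qed.

Lemma builds_bin_digits g m : builds g (6 * m + 3) (fun g' =>
  [/\ gen g' (2 ^ m) 1 (cst c0), gen g' (2 ^ m) 1 (cst c1), gen g' (2 ^ m) 1 (cst cd) &
      gen g' (2 ^ m) m.+1 (fun r c => bin_entry c0 c1 cd m r c.+1)]).
Proof.
elim: m => [|m IH].
  eapply builds_le.
    bind (builds_term g c0) => Z0; bind (builds_term _ c1) => Z1.
    by bind (builds_term _ cd) => D; apply: builds0.
  by [].
eapply builds_le.
  bind IH => -[Z0 Z1 D Bm].
  bind (builds_vcat_cst Z0 Z0) => Z0'; bind (builds_vcat_cst Z1 Z1) => Z1'.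
  bind (builds_vcat_cst D D) => D'; bind (builds_vcat Z0 Z1) => Lead.
  bind (builds_vcat Bm Bm) => Tail; bind (builds_hcat Lead Tail) => B; apply: builds0.
  rewrite expnS mul2n -addnn; split=> //.
  apply: gen_congr B => r [|c] lt_r lt_c; rewrite /hjoin /vjoin /=.
    by rewrite bin_entry_lead // expnS mul2n -addnn.
  rewrite subn1 /= bin_entry_tail //; case: ltnP => [lt_rm | le_mr]; first by rewrite modn_small.
  by rewrite -(modn_subMl (q := 1)) mul1n // modn_small //; lia.
lia.
Qed.

Variable n : nat.
Local Notation SB := (shiftbin_entry c0 c1 cd n).

Lemma shiftbin_entry_shift L r c : L <= r -> SB (r - L) c = SB r (L * (n + 2) + c).
Proof.
move=> le_L; rewrite /shiftbin_entry /= divnMDl ?addn_gt0 ?orbT // modnMDl.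
set j := c %/ (n + 2).
have -> : (L + j <= r) = (j <= r - L) by lia.
by rewrite (_ : r < _ = (r - L < j + 2 ^ n)) ?subnDA //; lia.
Qed.

Lemma shiftbin_entry_above r c : r < c %/ (n + 2) -> SB r c = c0.
Proof. by move=> lt_r; rewrite /shiftbin_entry /= leqNgt lt_r. Qed.

Lemma shiftbin_entry_below r c : c %/ (n + 2) + 2 ^ n <= r -> SB r c = c0.
Proof. by move=> le_r; rewrite /shiftbin_entry /= [r < _]ltnNge le_r andbF. Qed.

(* The first 2^t column blocks of ShiftBin, truncated below their last nonzero row,
   double in both dimensions: [Y 0; 0 Y]. *)
Lemma builds_shiftbin_prefix g t :
  gen g (2 ^ n + 1) (n + 2) SB -> gen g 1 (n + 2) (cst c0) ->
  builds g (5 * t) (fun g' =>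
    gen g' (2 ^ n + 2 ^ t) (2 ^ t * (n + 2)) SB /\ gen g' (2 ^ t) (2 ^ t * (n + 2)) (cst c0)).
Proof.
move=> Y0 Z0; elim: t => [|t IH]; first by apply: builds0; rewrite mul1n.
have n2_gt0 : 0 < n + 2 by rewrite addn2.
have eL : 2 ^ t.+1 = 2 ^ t + 2 ^ t by rewrite expnS mul2n addnn.
eapply builds_le.
  bind IH => -[Y Z].
  bind (builds_hcat_cst Z Z) => ZZ; bind (builds_vcat_cst ZZ ZZ) => Z'.
  bind (builds_vcat Y Z) => YZ; bind (builds_vcat Z Y) => ZY.
  rewrite addnCA addnA in ZY.
  bind (builds_hcat YZ ZY) => Y'; apply: builds0; rewrite eL mulnDl; split=> //.
  rewrite addnA; apply: gen_congr Y' => r c _ _; rewrite /hjoin /vjoin.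
  case: ltnP => lt_c; case: ltnP => lt_r //.
  - have : c %/ (n + 2) < 2 ^ t by rewrite ltn_divLR.
    by move=> ?; rewrite shiftbin_entry_below //; lia.
  - have : 2 ^ t <= c %/ (n + 2) by rewrite leq_divRL.
    by move=> ?; rewrite shiftbin_entry_above //; lia.
  by rewrite shiftbin_entry_shift // subnKC.
lia.
Qed.

Lemma shiftbin_first_block r c : r < 2 ^ n + 1 -> c < n + 2 ->
  vjoin (2 ^ n) (hjoin 1 (cst cd) (fun r c => bin_entry c0 c1 cd n r c.+1)) (cst c0) r c = SB r c.
Proof.
move=> _ lt_c; rewrite /vjoin /hjoin /shiftbin_entry /= divn_small // modn_small //.
rewrite add0n subn0; case: ltnP => //= _.
by case: c lt_c => [|c] //= _; rewrite subn1.
Qed.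

Lemma builds_shiftbin g :
  builds g (11 * n + 6 + 2 * trunc_log 2 (n + 2))
    (fun g' => gen g' (2 * 2 ^ n) (2 ^ n * (n + 2)) SB).
Proof.
have n2_gt0 : 0 < n + 2 by rewrite addn2.
eapply builds_le.
  bind (builds_bin_digits g n) => -[_ _ Dollar Digits].
  bind (builds_hcat Dollar Digits) => Bin.
  bind (builds_const _ c0 1 (n + 2)) => /(gen0_gen (ltn0Sn 0) n2_gt0) Z.
  rewrite add1n -(addn2 n) in Bin.
  bind (builds_vcat Bin Z) => /(gen_congr shiftbin_first_block) Y0.
  apply: builds_weaken (builds_shiftbin_prefix n Y0 Z) => ? [Y _].
  by rewrite mul2n -addnn.
by rewrite trunc_log1; lia.
Qed.

End BinaryCounter.

Section CString.
Variables (c0 c1 cd : S) (M : nat).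
Local Notation n := (logMp M).
Local Notation P := (2 ^ n).
Local Notation W := (2 ^ n * (n + 2)).
Local Notation SB := (shiftbin_entry c0 c1 cd n).
Local Notation C H := (C_entry c0 c1 cd H M).
Hypothesis M_ge4 : 4 <= M.

Lemma P2_gt0 : 0 < 2 * P.
Proof. by rewrite muln_gt0 expn_gt0. Qed.

(* The left block of C_{H,M}, with H rows; the right block is [0_P; lcol (H - P)]. *)
Definition lcol H r c := if r %/ (2 * P) < H %/ (2 * P) then SB (r %% (2 * P)) c else c0.

Lemma C_entry_lcol H r c :
  C H r c = hjoin (W + W) (hjoin W (lcol H) (vjoin P (cst c0) (lcol (H - P)))) (cst c0) r c.
Proof.
rewrite /C_entry /hjoin /vjoin /lcol.
case: (ltnP c W) => lt_cW; first by rewrite ltn_addr.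
have -> : W + W = 2 * W by rewrite mul2n addnn.
by case: ifP.
Qed.

Lemma lcol_small H r c : H < 2 * P -> lcol H r c = c0.
Proof. by move=> lt_H; rewrite /lcol (divn_small lt_H). Qed.

Lemma lcol_cat q H r c :
  vjoin (q * (2 * P)) (fun r c => SB (r %% (2 * P)) c) (lcol H) r c = lcol (q * (2 * P) + H) r c.
Proof.
rewrite /vjoin /lcol (divnMDl _ _ P2_gt0); case: ltnP => [lt_r | le_r].
  by rewrite (leq_trans _ (leq_addr _ _)) // ltn_divLR ?P2_gt0.
have [r' ->] : exists r', r = q * (2 * P) + r' by exists (r - q * (2 * P)); rewrite subnKC.
by rewrite addKn (divnMDl _ _ P2_gt0) modnMDl ltn_add2l.
Qed.

Definition C_columns g H := [/\ gen0 g H W (lcol H), gen0 g (H - P) W (lcol (H - P))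
  & gen0 g H (M - (W + W)) (cst c0)].

Lemma builds_C g H : P <= H -> gen0 g P W (cst c0) -> C_columns g H ->
  builds g 3 (fun g' => gen g' H M (C H)).
Proof.
move=> le_PH Z_P [L R Z].
have le_WM : W + W <= M by rewrite addnn -mul2n logMp_fits.
have H_gt0 : 0 < H by rewrite (leq_trans _ le_PH) ?expn_gt0.
eapply builds_le.
  bind (builds_vcat0 Z_P R) => R'; rewrite subnKC // in R'.
  bind (builds_hcat0 L R') => LR; bind (builds_hcat0 LR Z) => C'; apply: builds0.
  rewrite subnKC // in C'; apply: gen_congr (gen0_gen H_gt0 _ C') => [r c _ _|].
    by rewrite C_entry_lcol.
  by rewrite (leq_trans _ M_ge4).
by [].
Qed.

Lemma builds_C_columns_grow g H beta : P <= H ->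
  gen0 g (beta * (2 * P)) W (fun r c => SB (r %% (2 * P)) c) ->
  gen0 g (beta * (2 * P)) (M - (W + W)) (cst c0) ->
  C_columns g H -> builds g 3 (fun g' => C_columns g' (beta * (2 * P) + H)).
Proof.
move=> le_PH Bs Zs [L R Z]; eapply builds_le.
  bind (builds_vcat0 Bs L) => L'; bind (builds_vcat0 Bs R) => R'.
  bind (builds_vcat0_cst Zs Z) => Z'; apply: builds0.
  rewrite /C_columns -addnBA //; split=> //.
    by apply: gen0_congr L' => r c _ _; apply: lcol_cat.
  by apply: gen0_congr R' => r c _ _; apply: lcol_cat.
by [].
Qed.

Lemma C_columns_cat g s H : C_columns g H -> C_columns (g ++ s) H.
Proof. by case=> L R Z; split; apply: gen0_cat. Qed.

Lemma builds_C_iter g H beta K : P <= H ->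
  gen0 g P W (cst c0) ->
  gen0 g (beta * (2 * P)) W (fun r c => SB (r %% (2 * P)) c) ->
  gen0 g (beta * (2 * P)) (M - (W + W)) (cst c0) ->
  C_columns g H ->
  builds g (6 * K + 3) (fun g' => C_columns g' (K * (beta * (2 * P)) + H) /\
    forall u, u <= K -> gen g' (u * (beta * (2 * P)) + H) M (C (u * (beta * (2 * P)) + H))).
Proof.
move=> le_PH Z_P Bs Zs Cols; set d := beta * (2 * P).
elim: K => [|K IH].
  eapply builds_le.
    bind (builds_C le_PH Z_P Cols) => CH; apply: builds0; rewrite mul0n add0n.
    by split; [exact: C_columns_cat | case=> // _; rewrite mul0n add0n].
  by [].
have le_PH' : P <= K * d + H by apply: leq_trans le_PH (leq_addl _ _).
eapply builds_le.
  bind IH => -[Cols' Cs].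
  bind (builds_C_columns_grow le_PH' Bs Zs Cols') => Cols''.
  bind (builds_C (leq_trans le_PH' (leq_addl _ _)) Z_P Cols'') => CH.
  apply: builds0; rewrite mulSn -addnA.
  split=> [|u]; first exact: C_columns_cat.
  rewrite leq_eqVlt => /orP[/eqP-> | lt_u]; first by rewrite mulSn -addnA.
  by apply/gen_cat/gen_cat/Cs.
lia.
Qed.

Lemma builds_lcol g H : gen g (2 * P) W SB ->
  builds g (4 * trunc_log 2 H + 2 * trunc_log 2 W + 2) (fun g' => gen0 g' H W (lcol H)).
Proof.
move=> B; eapply builds_le.
  bind (builds_vrep0 (H %/ (2 * P)) B) => Bs.
  bind (builds_const _ c0 (H %% (2 * P)) W) => Z.
  bind (builds_vcat0 Bs Z) => L; apply: builds0.
  rewrite -divn_eq in L; apply: gen0_congr L => r c _ _.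
  rewrite {2}(divn_eq H (2 * P)) -lcol_cat /vjoin; case: ifP => // _.
  by rewrite lcol_small ?ltn_mod ?P2_gt0.
have := leq_trunc_log 2 (leq_div H (2 * P)); have := leq_trunc_log 2 (leq_mod H (2 * P)).
lia.
Qed.

Lemma builds_C_progression g H beta K X : P <= H -> H <= X -> beta * (2 * P) <= X ->
  gen g (2 * P) W SB ->
  builds g (16 * trunc_log 2 X + 10 * trunc_log 2 M + 6 * K + 10)
    (fun g' => forall u, u <= K ->
       gen g' (u * (beta * (2 * P)) + H) M (C (u * (beta * (2 * P)) + H))).
Proof.
move=> le_PH le_HX le_dX B.
eapply builds_le.
  bind (builds_lcol H B) => L; bind (builds_lcol (H - P) B) => R.
  bind (builds_const _ c0 H (M - (W + W))) => Z; bind (builds_const _ c0 P W) => Z_P.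
  bind (builds_vrep0 beta B) => Bs.
  bind (builds_const _ c0 (beta * (2 * P)) (M - (W + W))) => Zs.
  apply: builds_weaken (builds_C_iter K le_PH Z_P Bs Zs (And3 L R Z)) => ? [] //.
have le_WM : W <= M by have := logMp_fits M_ge4; lia.
have tl_X y : y <= X -> trunc_log 2 y <= trunc_log 2 X by apply: leq_trunc_log.
have tl_M y : y <= M -> trunc_log 2 y <= trunc_log 2 M by apply: leq_trunc_log.
have := tl_X _ le_HX; have := tl_X (H - P) ltac:(lia); have := tl_X P ltac:(lia).
have := tl_X _ le_dX; have := tl_X beta (leq_trans (leq_pmulr _ P2_gt0) le_dX).
have := tl_M _ le_WM; have := tl_M (M - (W + W)) (leq_subr _ _).
lia.
Qed.

(* 2b = (b / P) 2P is a multiple of the period 2P of [lcol]. *)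
Lemma builds_C_family g N b k : P <= N -> b <= N -> P %| b ->
  builds g (11 * n + 6 + 2 * trunc_log 2 (n + 2) +
            2 * (16 * trunc_log 2 (N + N) + 10 * trunc_log 2 M + 6 * k + 10))
    (fun g' => forall i, i <= k -> gen g' (N + i * b) M (C (N + i * b))).
Proof.
move=> le_PN le_bN P_b.
have e2b : b %/ P * (2 * P) = b + b by rewrite mulnCA divnK // mul2n addnn.
have le_2b : b %/ P * (2 * P) <= N + N by rewrite e2b leq_add.
have le_PNb : P <= N + b by rewrite (leq_trans le_PN) ?leq_addr.
have le_Nb : N + b <= N + N by rewrite leq_add2l.
eapply builds_le.
  bind (builds_shiftbin c0 c1 cd n g) => B.
  bind (builds_C_progression k le_PN (leq_addr N N) le_2b B) => Even.
  bind (builds_C_progression k le_PNb le_Nb le_2b B) => Odd.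
  apply: builds0 => i le_ik; rewrite e2b in Even Odd.
  have le_hk : i./2 <= k by rewrite (leq_trans _ le_ik) // -divn2 leq_div.
  move: le_hk (odd_double_half i); move: (i./2) => h le_hk; case: (odd i) => /= <-.
    by rewrite (_ : N + _ * b = h * (b + b) + (N + b)); [apply: Odd | rewrite -mul2n; nia].
  by rewrite (_ : N + _ * b = h * (b + b) + N); [apply/gen_cat/Even | rewrite -mul2n; nia].
lia.
Qed.

End CString.
End Builder.

Lemma Cstr_family_slp S (c0 c1 cd : S) N M b k :
  1 <= N -> 4 <= M -> 2 ^ logMp M <= N -> b <= N -> 2 ^ logMp M %| b ->
  exists2 g : slp S, slp_wf g /\ size g <= 100 * (trunc_log 2 N + trunc_log 2 M + k) &
    forall i, i <= k -> exists j, j < size g /\ expNT g j = Cstr c0 c1 cd (N + i * b) M.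
Proof.
move=> N_gt0 M_ge4 le_PN le_bN P_b.
have [g [wf_g le_g] Cs] := builds_nil (builds_C_family c0 c1 cd M_ge4 [::] k le_PN le_bN P_b).
exists g => [|i /Cs [j [lt_j _ _ e_j]]]; last by exists j.
split=> //; apply: leq_trans le_g _.
set n := logMp M; have fits := logMp_fits M_ge4; rewrite -/n in fits.
have P_gt0 : 0 < 2 ^ n by rewrite expn_gt0.
have le_PM : 2 ^ n <= M by nia.
have le_n2M : n + 2 <= M by nia.
have := leq_trunc_log 2 le_n2M; have := trunc_log_max (leqnn 2) le_PM.
have := @trunc_log_max 2 M 2 (leqnn 2) M_ge4; rewrite addnn trunc_log2_double //.
lia.
Qed.

Lemma ln_le_INR m n : (0 < m)%N -> (m <= n)%N -> Rle (ln (INR m)) (ln (INR n)).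
Proof.
move=> m_gt0 /leP/le_INR/Rle_lt_or_eq_dec[lt_mn | ->]; last exact: Rle_refl.
by apply/Rlt_le/ln_increasing => //; apply/lt_0_INR/ltP.
Qed.

Lemma INR_expn m t : INR (m ^ t) = Rpow_def.pow (INR m) t.
Proof. by elim: t => // t IH; rewrite expnS mult_INR IH. Qed.

Lemma log2R_ge t x : (2 ^ t <= x)%N -> Rle (INR t) (log2R x).
Proof.
move=> le_x; have ln2_gt0 : Rlt 0 (ln (INR 2)) by rewrite -ln_1; apply: ln_increasing => /=; lra.
apply/(Rmult_le_reg_r _ _ _ ln2_gt0); rewrite /log2R /Rdiv Rmult_assoc Rinv_l ?Rmult_1_r; last lra.
rewrite -ln_pow -?INR_expn; last exact/lt_0_INR/ltP.
by apply: ln_le_INR le_x; rewrite expn_gt0.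
Qed.

Theorem mainTheorem9 :
  exists c : R, Rlt 0 c /\
  forall (S : Type) (c0 c1 cd : S) (N M b k : nat),
    (1 <= N)%N -> (4 <= M)%N ->
    (2 ^ logMp M <= N)%N ->
    (0 < b)%N -> (b <= N)%N -> (2 ^ logMp M %| b)%N ->
    exists g : slp S,
      slp_wf g /\
      Rle (INR (slp_size g)) (Rmult c (Rplus (Rplus (log2R N) (log2R M)) (INR k))) /\
      forall i : nat, (i <= k)%N ->
        exists j : nat, (j < slp_size g)%N /\
          expNT g j = Cstr c0 c1 cd (N + i * b) M.
Proof.
exists (INR 100); split; first exact/lt_0_INR/ltP.
move=> S c0 c1 cd N M b k N_gt0 M_ge4 le_PN _ le_bN P_b.
have [g [wf_g le_g] Cs] := Cstr_family_slp c0 c1 cd k N_gt0 M_ge4 le_PN le_bN P_b.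
exists g; split=> //; split=> //.
apply: Rle_trans (le_INR _ _ (elimT leP le_g)) _.
rewrite mult_INR !plus_INR; apply: Rmult_le_compat_l; first exact: pos_INR.
apply/Rplus_le_compat_r/Rplus_le_compat; apply/log2R_ge/trunc_logP => //.
exact: leq_trans M_ge4.
Qed.
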